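(* Let $d\ge 2$ and let $D\subset T_d$ be a domain with $|D|\ge 2$ and $|D|\equiv 2\pmod{d-1}$. Then $D$ is optimal if and only if $D$ is full.
   Context: $T_d$ is the $d$-regular tree (connected, acyclic, every vertex of degree $d$). A domain is a finite nonempty connected set $D$ of vertices of $T_d$, identified with its induced subgraph. For $x\in D$, $\deg_D(x)$ is the number of neighbours of $x$ lying in $D$. The (inner vertex) boundary is $\partial D=\{x\in D:\deg_D(x)<d\}$. For $k\ge1$, $I_d(k)=\min\{|\partial D| : D\subset T_d \text{ a domain with } |D|=k\}$, and $D$ is optimal if $|\partial D|=I_d(|D|)$. For $|D|\ge2$, $R(D)=\{x\in\partial D: 2\le \deg_D(x)\le d-1\}$ and $D$ is full if $R(D)=\emptyset$. *)

From mathcomp Require Import all_boot.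
Set Implicit Arguments. Unset Strict Implicit. Unset Printing Implicit Defensive.

(* Model of the d-regular tree T_d: vertices are reduced words over the
   alphabet 'I_d (no two consecutive equal letters), i.e. elements of the
   free product of d copies of Z/2Z; x ~ y iff one is the other extended by
   one letter.  Every vertex then has exactly d neighbours. *)
Definition vtx (d : nat) := seq 'I_d.

Definition reduced (d : nat) (x : vtx d) : bool :=
  sorted (fun a b : 'I_d => a != b) x.

Definition child (d : nat) (x y : vtx d) : bool :=
  (size y == (size x).+1) && (take (size x) y == x).
Definition adj (d : nat) (x y : vtx d) : bool := child x y || child y x.

(* A finite vertex set is represented by a duplicate-free list. *)
Definition connected_set (d : nat) (D : seq (vtx d)) : Prop :=
  forall x y, x \in D -> y \in D ->
    exists p : seq (vtx d),
      [/\ path (@adj d) x p, last x p = y & all (fun z => z \in D) p].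

Definition domain (d : nat) (D : seq (vtx d)) : Prop :=
  [/\ uniq D, D != [::], all (@reduced d) D & connected_set D].

Definition degD (d : nat) (D : seq (vtx d)) (x : vtx d) : nat :=
  count (adj x) D.

Definition bnd (d : nat) (D : seq (vtx d)) : seq (vtx d) :=
  [seq x <- D | degD D x < d].

Definition optimal (d : nat) (D : seq (vtx d)) : Prop :=
  forall D' : seq (vtx d), domain D' -> size D' = size D ->
    size (bnd D) <= size (bnd D').

Definition Rset (d : nat) (D : seq (vtx d)) : seq (vtx d) :=
  [seq x <- bnd D | (2 <= degD D x) && (degD D x <= d.-1)].

Definition full (d : nat) (D : seq (vtx d)) : Prop := Rset D = [::].

From mathcomp Require Import all_boot zify.
Set Implicit Arguments. Unset Strict Implicit. Unset Printing Implicit Defensive.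

(* Let D be a domain with n >= 2 vertices, P of them interior (of degree d).
   The degrees sum to 2(n-1), since every vertex but the unique one without a
   parent in D has exactly one parent in D.  Every vertex has degree at least 1,
   those of R(D) at least 2 and interior ones d, so (d-1)P + |R(D)| <= n - 2;
   if D is full every vertex has degree 1 or d and (d-1)P = n - 2.  As
   |bnd D| = n - P, a full domain has the smallest boundary among domains of
   its size.  Conversely, for n = 2 mod (d-1) a caterpillar (a path of
   (n-2)/(d-1) vertices together with all their neighbours) has
   (d-1)P = n - 2, so an optimal D satisfies (d-1)P >= n - 2, which forces
   R(D) to be empty. *)

Lemma count_sum (T : Type) (a : pred T) (s : seq T) :
  count a s = \sum_(x <- s) a x.
Proof. by rewrite -sumn_count sumnE big_map. Qed.

Lemma uniq_leq_count (T : eqType) (a : pred T) (s L : seq T) :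
  uniq L -> {subset L <= [pred z in s | a z]} -> size L <= count a s.
Proof.
move=> uL sub; rewrite -size_filter; apply: uniq_leq_size => // z /sub.
by rewrite mem_filter andbC.
Qed.

Lemma uniq_size_le1 (T : eqType) (s : seq T) :
  uniq s -> {in s &, forall a b, a = b} -> size s <= 1.
Proof.
case: s => [|a [|b s]] //= /andP[aNs _] eq_s.
by move: aNs; rewrite (eq_s a b) ?inE ?eqxx ?orbT.
Qed.

Section Tree.
Variable d : nat.
Implicit Types (x y : vtx d) (D : seq (vtx d)).

Lemma childP x y : reflect (exists a, y = rcons x a) (child x y).
Proof.
apply: (iffP andP) => [[/eqP sy /eqP ty]|[a ->]]; last first.
  by rewrite size_rcons -cats1 take_size_cat.
have := cat_take_drop (size x) y; rewrite ty.
have : size (drop (size x) y) = 1 by rewrite size_drop sy subSnn.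
by case: (drop _ _) => [|a [|]] // _ <-; exists a; rewrite cats1.
Qed.

Lemma child_rcons x a : child x (rcons x a).
Proof. by apply/childP; exists a. Qed.

Lemma child_size x y : child x y -> size y = (size x).+1.
Proof. by move=> /childP[a ->]; rewrite size_rcons. Qed.

Lemma parent_unique x x' y : child x y -> child x' y -> x = x'.
Proof. by move=> /childP[a ->] /childP[b /rcons_inj[]]. Qed.

Lemma adj_sym : symmetric (@adj d).
Proof. by move=> x y; rewrite /adj orbC. Qed.

Lemma degD_split D x : degD D x = count (child x) D + count (fun z => child z x) D.
Proof.
rewrite /degD -count_predUI (@eq_count _ (predI _ _) pred0) ?count_pred0 ?addn0 //.
by move=> y /=; apply/negP => /andP[/child_size h1 /child_size h2]; lia.
Qed.

Definition parentless D y := ~~ has (fun z => child z y) D.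

Lemma has_parentless D : D != [::] -> has (parentless D) D.
Proof.
move=> nD; apply/negPn/negP => /hasPn noroot.
suff deep n y : y \in D -> n <= size y.
  case: D nD noroot deep => // y D _ _ /(_ (size y).+1 y).
  by rewrite mem_head ltnn => /(_ isT).
elim: n y => // n IHn y yD.
have /hasP[x xD /child_size->] := negbNE (noroot y yD).
exact: IHn.
Qed.

Lemma prefix_path_parentless D t v p : parentless D t ->
  path (@adj d) v p -> all (fun z => z \in D) p -> prefix t v -> prefix t (last v p).
Proof.
move=> tD; elim: p v => //= u p IHp v /andP[vu up] /andP[uD pD] tv.
apply: IHp => //; case/orP: vu => [/childP[a ->]|/childP[a vE]].
  exact: prefix_trans tv (prefix_rcons v a).
move: tv; rewrite vE => /prefixP[s]; case/lastP: s => [|s b].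
  rewrite cats0 => tE; move/hasPn: tD => /(_ u uD).
  by rewrite -tE child_rcons.
by rewrite -rcons_cat => /rcons_inj[-> _]; apply: prefix_prefix.
Qed.

Lemma parentless_unique D t1 t2 : connected_set D -> t1 \in D -> t2 \in D ->
  parentless D t1 -> parentless D t2 -> t1 = t2.
Proof.
move=> cD t1D t2D p1 p2.
have [q1 [q1P q1E q1D]] := cD _ _ t1D t2D.
have [q2 [q2P q2E q2D]] := cD _ _ t2D t1D.
have := prefix_path_parentless p1 q1P q1D (prefix_refl t1).
have := prefix_path_parentless p2 q2P q2D (prefix_refl t2).
rewrite q1E q2E => t21 t12.
have sizeE : size t1 = size t2 by apply/eqP; rewrite eqn_leq !size_prefix.
by move: t12; rewrite prefixE sizeE take_size => /eqP.
Qed.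

Lemma count_parentless D : domain D -> count (parentless D) D = 1.
Proof.
case=> uD nD _ cD; apply/eqP; rewrite eqn_leq -has_count has_parentless // andbT.
rewrite -size_filter; apply: uniq_size_le1; first exact: filter_uniq.
move=> t1 t2; rewrite !mem_filter => /andP[p1 t1D] /andP[p2 t2D].
exact: parentless_unique cD t1D t2D p1 p2.
Qed.

Lemma count_parent D y : uniq D ->
  count (fun z => child z y) D = ~~ parentless D y.
Proof.
move=> uD; rewrite /parentless negbK; have [hasp|] := boolP (has _ _); last first.
  by rewrite has_count lt0n negbK => /eqP.
apply/eqP; rewrite eqn_leq -has_count hasp andbT -size_filter.
apply: uniq_size_le1; first exact: filter_uniq.
by move=> x x'; rewrite !mem_filter => /andP[+ _] /andP[+ _]; apply: parent_unique.
Qed.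

Lemma sum_degD D : domain D -> \sum_(x <- D) degD D x = 2 * (size D).-1.
Proof.
move=> dD; have [uD _ _ _] := dD.
have children_parents :
    \sum_(x <- D) count (child x) D = \sum_(y <- D) count (fun z => child z y) D.
  under eq_bigr do rewrite count_sum.
  by rewrite exchange_big; apply: eq_bigr => y _; rewrite count_sum.
rewrite (eq_bigr _ (fun x _ => degD_split D x)) big_split /= children_parents.
rewrite addnn -mul2n.
under eq_bigr do rewrite count_parent //.
by rewrite -count_sum -(count_predC (parentless D)) count_parentless.
Qed.

Lemma reduced_rcons (c a : 'I_d) cs :
  reduced (rcons (c :: cs) a) = reduced (c :: cs) && (last c cs != a).
Proof. by rewrite /reduced rcons_cons /= rcons_path. Qed.

Lemma reduced_rcons_rcons (s : seq 'I_d) c a :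
  reduced (rcons (rcons s c) a) = reduced (rcons s c) && (c != a).
Proof.
case: s => [|c' s]; first by rewrite /reduced /= andbT.
by rewrite rcons_cons reduced_rcons last_rcons.
Qed.

Lemma count_neq_enum (c : 'I_d) : count (predC1 c) (enum 'I_d) = d.-1.
Proof.
have := count_predC (pred1 c) (enum 'I_d).
rewrite count_uniq_mem ?enum_uniq // mem_enum size_enum_ord => dE.
by rewrite -[in RHS]dE.
Qed.

Lemma count_reduced_rcons x : reduced x ->
  count (fun a => reduced (rcons x a)) (enum 'I_d) = if x is [::] then d else d.-1.
Proof.
case: x => [|c cs] rx.
  by rewrite (eq_count (a2 := predT)) ?count_predT ?size_enum_ord.
rewrite -(count_neq_enum (last c cs)); apply: eq_count => a.
by rewrite reduced_rcons rx eq_sym.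
Qed.

Lemma count_child_le D x : uniq D -> all (@reduced d) D ->
  count (child x) D <= count (fun a => reduced (rcons x a)) (enum 'I_d).
Proof.
move=> uD rD; rewrite -!size_filter -(size_map (rcons x)).
apply: uniq_leq_size => [|z]; first exact: filter_uniq.
rewrite mem_filter => /andP[/childP[a ->] /(allP rD) ra].
by rewrite map_f // mem_filter ra mem_enum.
Qed.

Lemma count_parent_le D x : uniq D -> count (fun z => child z x) D <= (x != [::]).
Proof.
move=> uD; case: x => [|c cs]; last by rewrite count_parent ?leq_b1.
by rewrite (eq_count (a2 := pred0)) ?count_pred0.
Qed.

Lemma degD_le D x : uniq D -> all (@reduced d) D -> reduced x -> degD D x <= d.
Proof.
move=> uD rD rx; rewrite degD_split.
have := count_parent_le x uD; have := count_child_le x uD rD.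
rewrite count_reduced_rcons //; case: x {rx} => [|c cs] /=; first lia.
have := ltn_ord c; lia.
Qed.

Lemma degD_gt0 D x : domain D -> 2 <= size D -> x \in D -> 0 < degD D x.
Proof.
case=> uD _ _ cD sD xD; have [y yD yx] : exists2 y, y \in D & y != x.
  apply/hasP; apply: contraTT sD => /hasPn sameD; rewrite -leqNgt.
  by apply: uniq_size_le1 => // a b /sameD/negbNE/eqP-> /sameD/negbNE/eqP->.
have [[|u p] [/= xp px pD]] := cD x y xD yD; first by rewrite px eqxx in yx.
rewrite /degD -has_count; apply/hasP; exists u; first by case/andP: pD.
by case/andP: xp.
Qed.

Definition interior D x := d <= degD D x.

Lemma size_bnd D : size (bnd D) = size D - count (interior D) D.
Proof.
rewrite /bnd size_filter -(count_predC (interior D) D) addKn.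
by apply: eq_count => x; rewrite /= /interior ltnNge.
Qed.

Lemma size_Rset D : size (Rset D) = count (fun x => 2 <= degD D x < d) D.
Proof.
rewrite /Rset /bnd size_filter count_filter; apply: eq_count => x /=.
by case: (ltnP (degD D x) d) => [lt_d|]; rewrite ?andbF //= andbT; lia.
Qed.

Lemma sum_affine_count (T : Type) (s : seq T) (k : nat) (a b : pred T) :
  \sum_(x <- s) (1 + k * a x + b x) = size s + k * count a s + count b s.
Proof. by rewrite !big_split /= sum1_size -big_distrr /= !count_sum. Qed.

Lemma interior_Rset_bound D : domain D -> 2 <= size D ->
  d.-1 * count (interior D) D + size (Rset D) <= size D - 2.
Proof.
move=> dD sD; have := sum_degD dD.
have deg_lb : \sum_(x <- D) (1 + d.-1 * interior D x + (2 <= degD D x < d))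
             <= \sum_(x <- D) degD D x.
  rewrite big_seq [X in _ <= X]big_seq; apply: leq_sum => x xD.
  have := degD_gt0 dD sD xD; rewrite /interior.
  by case: (leqP d (degD D x)); case: (leqP 2 (degD D x)) => /=; lia.
move: deg_lb; rewrite sum_affine_count -size_Rset; lia.
Qed.

Lemma full_interior D : domain D -> 2 <= size D -> full D ->
  d.-1 * count (interior D) D = size D - 2.
Proof.
move=> dD sD fD; have [uD _ rD _] := dD.
have /hasPn notR : ~~ has (fun x => 2 <= degD D x < d) D.
  by rewrite has_count -size_Rset fD.
have deg_ub : \sum_(x <- D) degD D x
             <= \sum_(x <- D) (1 + d.-1 * interior D x + pred0 x).
  rewrite big_seq [X in _ <= X]big_seq; apply: leq_sum => x xD.
  have := degD_le uD rD (allP rD x xD); have := notR x xD; rewrite /interior.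
  by case: (leqP d (degD D x)); case: (leqP 2 (degD D x)) => /=; lia.
have := interior_Rset_bound dD sD; rewrite fD.
move: deg_ub; rewrite sum_affine_count count_pred0 sum_degD //=; lia.
Qed.

End Tree.

Lemma connected_from d (D : seq (vtx d)) r : r \in D ->
  (forall x, x \in D ->
     exists p, [/\ path (@adj d) r p, last r p = x & all (fun z => z \in D) p]) ->
  connected_set D.
Proof.
move=> rD reach x y xD yD.
have [p [rp px pD]] := reach x xD; have [q [rq qy qD]] := reach y yD.
have back : last x (rev (belast r p)) = r.
  by case: p {rp pD} px => [|u p] /= <- //; rewrite rev_cons last_rcons.
exists (rev (belast r p) ++ q); split.
- have adjC : (fun y z => @adj d z y) =2 @adj d by move=> ? ?; apply: adj_sym.
  by rewrite cat_path back rq andbT -px rev_path (eq_path adjC).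
- by rewrite last_cat back.
- rewrite all_cat all_rev qD andbT; apply/allP => z /mem_belast.
  by rewrite inE => /predU1P[->|/(allP pD)].
Qed.

Section Caterpillar.
Variables (d : nat) (a0 a1 : 'I_d).
Hypothesis a01 : a0 != a1.

Definition zigzag_letter (i : nat) := if odd i then a1 else a0.

Fixpoint zigzag (i : nat) : vtx d :=
  if i is i'.+1 then rcons (zigzag i') (zigzag_letter i') else [::].

(* The spine zigzag 0, ..., zigzag M.-1 together with all its neighbours. *)
Definition caterpillar (M : nat) : seq (vtx d) :=
  [::] :: [seq rcons (zigzag j) a
             | j <- iota 0 M, a <- [seq a <- enum 'I_d | reduced (rcons (zigzag j) a)]].

Lemma size_zigzag j : size (zigzag j) = j.
Proof. by elim: j => //= j IHj; rewrite size_rcons IHj. Qed.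

Lemma zigzag_inj : injective zigzag.
Proof. by move=> i j /(congr1 size); rewrite !size_zigzag. Qed.

Lemma zigzag_letterS j : zigzag_letter j != zigzag_letter j.+1.
Proof. by rewrite /zigzag_letter /=; case: odd; rewrite // eq_sym. Qed.

Lemma reduced_zigzag j : reduced (zigzag j).
Proof.
elim: j => // [[|j]] // IHj.
by rewrite [zigzag _]/= reduced_rcons_rcons IHj zigzag_letterS.
Qed.

Lemma leaf_in_caterpillar M j a : j < M -> reduced (rcons (zigzag j) a) ->
  rcons (zigzag j) a \in caterpillar M.
Proof.
move=> jM ra; rewrite inE; apply/orP; right; apply/allpairsPdep.
by exists j, a; rewrite mem_iota mem_filter ra mem_enum.
Qed.

Lemma zigzag_in_caterpillar M j : j < M -> zigzag j \in caterpillar M.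
Proof.
case: j => [|j] jM; first exact: mem_head.
exact: leaf_in_caterpillar (ltnW jM) (reduced_zigzag j.+1).
Qed.

Lemma size_caterpillar M : size (caterpillar M.+1) = M.+1 * d.-1 + 2.
Proof.
have d_gt0 : 0 < d := leq_ltn_trans (leq0n _) (ltn_ord a0).
rewrite /caterpillar -cat1s size_cat size_allpairs_dep.
under eq_map do rewrite size_filter count_reduced_rcons ?reduced_zigzag //.
rewrite /=; set rest := map _ (iota 1 M).
have /all_pred1P-> : all (pred1 d.-1) rest.
  apply/allP => _ /mapP[[|j] /[!mem_iota] // _ ->].
  by case: (zigzag j.+1) (size_zigzag j.+1) => [|? ?] //= _; apply: eqxx.
rewrite sumn_nseq size_map size_iota; lia.
Qed.

Lemma uniq_caterpillar M : uniq (caterpillar M).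
Proof.
rewrite /caterpillar cons_uniq; apply/andP; split.
  by apply/negP => /allpairsPdep[j [a [_ _ /(congr1 size)]]]; rewrite size_rcons.
apply: allpairs_uniq_dep; first exact: iota_uniq.
  by move=> j _; apply/filter_uniq/enum_uniq.
by move=> [j a] [j' a'] _ _ /= /rcons_inj[/zigzag_inj eq_j ->]; subst.
Qed.

Lemma path_to_zigzag M j : j < M -> exists p,
  [/\ path (@adj d) [::] p, last [::] p = zigzag j &
      all (fun z => z \in caterpillar M) p].
Proof.
elim: j => [|j IHj] jM; first by exists [::].
have [p [pP pE pM]] := IHj (ltnW jM).
exists (rcons p (zigzag j.+1)).
by rewrite rcons_path pP pE /adj child_rcons last_rcons all_rcons pM
  zigzag_in_caterpillar.
Qed.

Lemma domain_caterpillar M : domain (caterpillar M).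
Proof.
split; [exact: uniq_caterpillar | by [] | |].
  apply/allP => z; rewrite inE => /predU1P[-> //|/allpairsPdep[j [a [_ + ->]]]].
  by rewrite mem_filter => /andP[].
apply: (connected_from (mem_head _ _)) => x.
rewrite inE => /predU1P[->|/allpairsPdep[j [a [+ + ->]]]]; first by exists [::].
rewrite mem_iota mem_filter => /andP[_ jM] /andP[ra _].
have [p [pP pE pM]] := path_to_zigzag jM.
exists (rcons p (rcons (zigzag j) a)).
by rewrite rcons_path pP pE /adj child_rcons last_rcons all_rcons pM leaf_in_caterpillar.
Qed.

(* All reduced one-letter extensions of zigzag j are children of it in the
   caterpillar, and so is its parent when j > 0. *)
Lemma interior_zigzag M j : j < M -> interior (caterpillar M) (zigzag j).
Proof.
move=> jM; rewrite /interior degD_split.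
have d_gt0 : 0 < d := leq_ltn_trans (leq0n _) (ltn_ord a0).
have children : (if zigzag j is [::] then d else d.-1)
                <= count (child (zigzag j)) (caterpillar M).
  rewrite -count_reduced_rcons ?reduced_zigzag // -size_filter.
  rewrite -(size_map (rcons (zigzag j))); apply: uniq_leq_count.
    by rewrite map_inj_uniq; [apply/filter_uniq/enum_uniq | move=> a b /rcons_inj[]].
  move=> z /mapP[a]; rewrite mem_filter => /andP[ra _] ->.
  by rewrite inE leaf_in_caterpillar // child_rcons.
have parent : (j != 0) <= count (fun z => child z (zigzag j)) (caterpillar M).
  case: j jM {children} => // j jM.
  rewrite (leq_trans (leq_b1 _)) // -has_count; apply/hasP.
  by exists (zigzag j); rewrite ?zigzag_in_caterpillar 1?ltnW // child_rcons.
by case: (zigzag j) (size_zigzag j) children parent => [|c cs] <- /=; lia.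
Qed.

Lemma count_interior_caterpillar M :
  M <= count (interior (caterpillar M)) (caterpillar M).
Proof.
rewrite -[M in M <= _](size_iota 0) -(size_map zigzag).
apply: uniq_leq_count; first by rewrite map_inj_uniq ?iota_uniq //; apply: zigzag_inj.
move=> z /mapP[j]; rewrite mem_iota => jM ->.
by rewrite inE zigzag_in_caterpillar // interior_zigzag.
Qed.
End Caterpillar.

Lemma exists_domain_interior d m : 2 <= d -> exists D : seq (vtx d),
  [/\ domain D, size D = m.+1 * d.-1 + 2 & m.+1 <= count (interior D) D].
Proof.
move=> d2; pose a0 : 'I_d := Ordinal (ltnW d2); pose a1 : 'I_d := Ordinal d2.
have a01 : a0 != a1 by [].
exists (caterpillar a0 a1 m.+1).
split; first exact: domain_caterpillar.
  exact: size_caterpillar.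
exact: count_interior_caterpillar.
Qed.

Theorem mainTheorem11 (d : nat) (D : seq (vtx d)) :
  2 <= d -> domain D -> 2 <= size D -> size D = 2 %[mod d.-1] ->
  (optimal D <-> full D).
Proof.
move=> d2 dD sD sD_mod.
have d1_gt0 : 0 < d.-1 by rewrite -subn1 subn_gt0.
have [m sDE] : exists m, size D - 2 = m * d.-1.
  by exists ((size D - 2) %/ d.-1); rewrite divnK // -eqn_mod_dvd // sD_mod.
have interior_le (D' : seq (vtx d)) :
    domain D' -> size D' = size D -> count (interior D') D' <= m.
  move=> dD' sD'; rewrite -(leq_pmul2l d1_gt0) [_ * m]mulnC -sDE -sD'.
  by apply: leq_trans (leq_addr _ _) (interior_Rset_bound dD' _); rewrite sD'.
split=> [opt | fD].
- have m_le : m <= count (interior D) D.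
    case: m sDE {interior_le} => [//|m] sDE.
    have [D' [dD' sD' int_D']] := exists_domain_interior m d2.
    have sDD' : size D' = size D by rewrite sD' -sDE subnK.
    have := opt D' dD' sDD'; rewrite !size_bnd sDD'.
    have := count_size (interior D') D'; rewrite sDD'; lia.
  have := interior_Rset_bound dD sD; rewrite sDE => bound.
  apply/size0nil; have := leq_mul (leqnn d.-1) m_le; lia.
- move=> D' dD' sD'; rewrite !size_bnd sD'.
  have /eqP := full_interior dD sD fD; rewrite sDE mulnC eqn_pmul2r // => /eqP->.
  have := interior_le D' dD' sD'; lia.
Qed.
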